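(* Let $\{p^\circ_{(R,\alpha)}\}_{(R,\alpha)}$ be a replacement rule satisfying the Fixation Axiom and representing neutral drift, and fix $u\in(0,1]$. For $\nu\in(0,1)$ let $\pi^{\nu}_{\mathrm{MSS}}$ denote the mutation–selection stationary distribution with mutation probability $u$ and mutational bias $\nu$. Then for every state $\mathbf{x}\in\{0,1\}^G$, $\pi^{\nu}_{\mathrm{MSS}}(\mathbf{x})=\pi^{1-\nu}_{\mathrm{MSS}}(\bar{\mathbf{x}})$, where $\bar x_g=1-x_g$ for all $g\in G$.
   Context: Setting. $G$ is a finite nonempty set of genetic sites; a state is $\mathbf{x}\in\{0,1\}^G$. A replacement event is $(R,\alpha)$ with $R\subseteq G$, $\alpha:R\to G$. A replacement rule representing neutral drift is a single probability distribution $\{p^\circ_{(R,\alpha)}\}$ over events, used in every state. With mutation probability $u\in[0,1]$ and bias $\nu\in(0,1)$, the evolutionary Markov chain moves from $\mathbf{x}$: draw $(R,\alpha)$ with probability $p^\circ_{(R,\alpha)}$; independently for $g\in R$, $x'_g=x_{\alpha(g)}$ w.p. $1-u$, $x'_g=1$ w.p. $u\nu$, $x'_g=0$ w.p. $u(1-\nu)$; $x'_g=x_g$ for $g\notin R$. Fixation Axiom: there exist $g\in G$, $m\ge1$, events $(R_k,\alpha_k)_{k=1}^m$ with $p^\circ_{(R_k,\alpha_k)}>0$, $g\in R_k$ for some $k$, and $\tilde\alpha_1\circ\cdots\circ\tilde\alpha_m(h)=g$ for all $h$, where $\tilde\alpha_k$ equals $\alpha_k$ on $R_k$ and the identity elsewhere.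 For $u>0$ this chain has a unique stationary distribution, the mutation–selection stationary distribution. *)

From HB Require Import structures.
From mathcomp Require Import all_boot all_order all_algebra.
Set Implicit Arguments. Unset Strict Implicit. Unset Printing Implicit Defensive.
Import Order.TTheory GRing.Theory Num.Theory.
Local Open Scope ring_scope.

(* States: x in {0,1}^G, encoded as boolean functions (true = 1). *)
Definition state (G : finType) := {ffun G -> bool}.

(* A replacement event (R, alpha).  alpha : R -> G is encoded as a total
   function G -> G; a replacement rule only charges events whose encoding is
   canonical (alpha g = g for g outside R), see [canonical_rule]. *)
Definition event (G : finType) := ({set G} * {ffun G -> G})%type.

Definition ev_R (G : finType) (e : event G) : {set G} := e.1.
Definition ev_alpha (G : finType) (e : event G) : G -> G := e.2.

Definition alpha_tilde (G : finType) (e : event G) (h : G) : G :=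
  if h \in ev_R e then ev_alpha e h else h.

(* A replacement rule representing neutral drift: one probability
   distribution over events (used in every state). *)
Definition is_rule (R : realFieldType) (G : finType) (p : event G -> R) :=
  (forall e, 0 <= p e) /\ \sum_(e : event G) p e = 1.

(* Only canonical encodings of events receive positive probability
   (this makes event G with p in bijection with distributions on true events). *)
Definition canonical_rule (R : realFieldType) (G : finType) (p : event G -> R) :=
  forall e, 0 < p e -> forall g, g \notin ev_R e -> ev_alpha e g = g.

Definition comp_tilde (G : finType) (es : seq (event G)) : G -> G :=
  foldr (fun e f => fun h => alpha_tilde e (f h)) id es.

Definition fixation_axiom (R : realFieldType) (G : finType) (p : event G -> R) :=
  exists (g : G) (es : seq (event G)),
    [/\ (0 < size es)%N,
        (forall e, e \in es -> 0 < p e),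
        (exists2 e, e \in es & g \in ev_R e) &
        (forall h, comp_tilde es h = g)].

Definition site_prob (R : realFieldType) (G : finType) (u nu : R)
  (e : event G) (x y : state G) (g : G) : R :=
  if g \in ev_R e then
    (1 - u) * (y g == x (ev_alpha e g))%:R
    + u * nu * (y g)%:R + u * (1 - nu) * (~~ y g)%:R
  else (y g == x g)%:R.

Definition trans (R : realFieldType) (G : finType) (p : event G -> R) (u nu : R)
  (x y : state G) : R :=
  \sum_(e : event G) p e * \prod_(g : G) site_prob u nu e x y g.

Definition stationary (R : realFieldType) (G : finType) (p : event G -> R) (u nu : R)
  (pi : state G -> R) :=
  [/\ forall x, 0 <= pi x,
      \sum_(x : state G) pi x = 1 &
      forall y, \sum_(x : state G) pi x * trans p u nu x y = pi y].

Definition flip (G : finType) (x : state G) : state G := [ffun g => ~~ x g].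

(** Flipping every site while exchanging [nu] and [1 - nu] leaves the
    transition probabilities unchanged, so [pi2 \o flip] is again a stationary
    distribution for the bias [nu].  It remains to see that this distribution
    is unique.  By the Fixation Axiom every site is replaced by some event of
    a fixed finite list of positive-probability events; performing these events
    and mutating every replaced site to 1 shows that, for some [n], the
    [n]-step kernel reaches the all-ones state from every state with positive
    probability.  Removing from that kernel the mass [c > 0] guaranteed in
    its all-ones column contracts the l1-norm of any signed invariant measure
    of total mass 0 by the factor [1 - c] (Doeblin), so such a measure
    vanishes. *)
From HB Require Import structures.
From mathcomp Require Import all_boot all_order all_algebra.
From mathcomp Require Import ring lra.
Set Implicit Arguments. Unset Strict Implicit. Unset Printing Implicit Defensive.
Import Order.TTheory GRing.Theory Num.Theory.
Local Open Scope ring_scope.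

Section Kernel.
Variables (R : realFieldType) (S : finType).
Implicit Types (P Q : S -> S -> R) (mu : S -> R).

Definition stochastic P :=
  (forall x y, 0 <= P x y) /\ (forall x, \sum_y P x y = 1).

Definition invariant P mu := forall y, \sum_x mu x * P x y = mu y.

Fixpoint kpow P n x y : R :=
  if n is n'.+1 then \sum_w P x w * kpow P n' w y else (x == y)%:R.

Lemma kpow_stochastic P n : stochastic P -> stochastic (kpow P n).
Proof.
move=> [P_ge0 P_sum1]; elim: n => [|n [IH_ge0 IH_sum1]] /=.
  split=> [x y|x]; first exact: ler0n.
  by rewrite (bigD1 x) //= eqxx big1 ?addr0 // => y /negbTE; rewrite eq_sym => ->.
split=> [x y|x]; first by apply: sumr_ge0 => w _; rewrite mulr_ge0.
rewrite exchange_big /= -(P_sum1 x); apply: eq_bigr => w _.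
by rewrite -mulr_sumr IH_sum1 mulr1.
Qed.

Lemma kpow_invariant P mu n : invariant P mu -> invariant (kpow P n) mu.
Proof.
move=> mu_inv; elim: n => [|n IH] y /=.
  rewrite (bigD1 y) //= eqxx mulr1 big1 ?addr0 // => x /negbTE ->.
  by rewrite mulr0.
under eq_bigr => x _ do rewrite mulr_sumr.
rewrite exchange_big /= -[RHS]IH; apply: eq_bigr => w _.
by rewrite -mu_inv mulr_suml; apply: eq_bigr => x _; rewrite mulrA.
Qed.

Lemma kpow_foldl_gt0 (A : eqType) P (f : S -> A -> S) (s : seq A) x :
  (forall x y, 0 <= P x y) -> (forall a x, a \in s -> 0 < P x (f x a)) ->
  0 < kpow P (size s) x (foldl f x s).
Proof.
move=> P_ge0; elim: s x => [|a s IH] x /= step_gt0; first by rewrite eqxx ltr01.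
have kpow_ge0 m y z : 0 <= kpow P m y z.
  by elim: m y => [|m IHm] y /=; rewrite ?ler0n ?sumr_ge0 // => w _; rewrite mulr_ge0.
rewrite (bigD1 (f x a)) //= ltr_pwDl ?sumr_ge0 // => [|w _]; last by rewrite mulr_ge0.
rewrite mulr_gt0 ?step_gt0 ?mem_head // IH // => b y bs.
by rewrite step_gt0 // inE bs orbT.
Qed.

Lemma invariant_mass0_eq0 Q z mu :
  stochastic Q -> (forall x, 0 < Q x z) ->
  invariant Q mu -> \sum_x mu x = 0 -> forall x, mu x = 0.
Proof.
move=> [Q_ge0 Q_sum1] Qz_gt0 mu_inv mu_mass0 x0.
have [c c_gt0 c_min] : exists2 c, 0 < c & forall x, c <= Q x z.
  case: (@arg_minP _ _ _ x0 xpredT (Q^~ z) isT) => x _ x_min.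
  by exists (Q x z) => // y; apply: x_min.
(* As [mu] has mass 0, the column mass [c] can be removed from [Q]. *)
pose Q' x y := Q x y - c * (y == z)%:R.
have Q'_ge0 x y : 0 <= Q' x y.
  by rewrite /Q' subr_ge0; case: eqP => [->|_]; rewrite ?mulr1 ?mulr0.
have mu_Q' y : mu y = \sum_x mu x * Q' x y.
  under eq_bigr => x _ do rewrite mulrBr.
  by rewrite sumrB mu_inv -mulr_suml mu_mass0 mul0r subr0.
have norm_le y : `|mu y| <= \sum_x `|mu x| * Q' x y.
  rewrite mu_Q'; apply: le_trans (ler_norm_sum _ _ _) _.
  by apply: ler_sum => x _; rewrite normrM (ger0_norm (Q'_ge0 _ _)).
have Q'_sum x : \sum_y Q' x y = 1 - c.
  rewrite sumrB Q_sum1 -mulr_sumr (bigD1 z) //= eqxx big1 ?addr0 ?mulr1 //.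
  by move=> y /negbTE ->.
have norm_sum_le : \sum_y `|mu y| <= (1 - c) * \sum_x `|mu x|.
  apply: le_trans (ler_sum _ (fun y _ => norm_le y)) _.
  rewrite exchange_big /= mulr_sumr.
  by under eq_bigr => x _ do rewrite -mulr_sumr Q'_sum mulrC.
have norm_sum_ge0 : 0 <= \sum_x `|mu x| by apply: sumr_ge0.
have norm_sum0 : \sum_x `|mu x| = 0 by nra.
by apply/eqP/normr0P; apply: psumr_eq0P norm_sum0 x0 isT => x _.
Qed.

Lemma invariant_uniq P n z mu1 mu2 :
  stochastic P -> (forall x, 0 < kpow P n x z) ->
  invariant P mu1 -> invariant P mu2 -> \sum_x mu1 x = \sum_x mu2 x ->
  forall x, mu1 x = mu2 x.
Proof.
move=> P_stoch col_gt0 mu1_inv mu2_inv mass_eq x; apply/subr0_eq.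
have mu_inv : invariant P (fun x => mu1 x - mu2 x).
  by move=> y; rewrite -mu1_inv -mu2_inv -sumrB; apply: eq_bigr => w _; rewrite mulrBl.
apply: (invariant_mass0_eq0 (kpow_stochastic n P_stoch) col_gt0 (kpow_invariant n mu_inv)).
by rewrite sumrB mass_eq subrr.
Qed.

End Kernel.

Section Flip.
Variables (R : realFieldType) (G : finType) (p : event G -> R) (u nu : R).

Lemma flipK : involutive (@flip G).
Proof. by move=> x; apply/ffunP => g; rewrite !ffunE negbK. Qed.

Lemma site_prob_flip e (x y : state G) g :
  site_prob u (1 - nu) e (flip x) (flip y) g = site_prob u nu e x y g.
Proof.
rewrite /site_prob !ffunE; case: ifP => _; last by case: (y g); case: (x g).
by case: (y g); case: (x _) => /=; ring.
Qed.

Lemma trans_flip (x y : state G) :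
  trans p u (1 - nu) (flip x) (flip y) = trans p u nu x y.
Proof.
by apply: eq_bigr => e _; congr (_ * _); apply: eq_bigr => g _; rewrite site_prob_flip.
Qed.

Lemma stationary_flip pi :
  stationary p u (1 - nu) pi -> stationary p u nu (pi \o @flip G).
Proof.
have flip_inj := can_inj flipK.
move=> [pi_ge0 pi_sum1 pi_inv]; split=> [x|| y] /=; first exact: pi_ge0.
  by rewrite -pi_sum1 [RHS](reindex_inj flip_inj).
rewrite -pi_inv [RHS](reindex_inj flip_inj) /=.
by apply: eq_bigr => x _; rewrite trans_flip.
Qed.

End Flip.

Section Uniqueness.
Variables (R : realFieldType) (G : finType) (p : event G -> R) (u nu : R).
Hypotheses (p_rule : is_rule p) (u_gt0 : 0 < u) (u_le1 : u <= 1).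
Hypotheses (nu_gt0 : 0 < nu) (nu_lt1 : nu < 1).

Lemma site_prob_replaced_gt0 e (x y : state G) g :
  g \in ev_R e -> 0 < site_prob u nu e x y g.
Proof.
move=> g_in; rewrite /site_prob g_in -addrA ltr_wpDl ?mulr_ge0 ?ler0n ?subr_ge0 //.
by case: (y g); rewrite /= ?mulr1 ?mulr0 ?addr0 ?add0r mulr_gt0 ?subr_gt0.
Qed.

Lemma site_prob_ge0 e (x y : state G) g : 0 <= site_prob u nu e x y g.
Proof.
case: (boolP (g \in ev_R e)) => [/site_prob_replaced_gt0/ltW //|g_notin].
by rewrite /site_prob (negbTE g_notin) ler0n.
Qed.

Lemma trans_stochastic : stochastic (trans p u nu).
Proof.
have [p_ge0 p_sum1] := p_rule.
split=> [x y|x].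
  by apply: sumr_ge0 => e _; rewrite mulr_ge0 ?prodr_ge0 // => g _; apply: site_prob_ge0.
rewrite /trans exchange_big /= -[RHS]p_sum1; apply: eq_bigr => e _.
rewrite -mulr_sumr.
pose F g b := site_prob u nu e x [ffun=> b] g.
have -> : \sum_(y : state G) \prod_g site_prob u nu e x y g = \prod_g \sum_b F g b.
  by rewrite bigA_distr_bigA; apply: eq_bigr => y _; apply: eq_bigr => g _;
     rewrite /F /site_prob !ffunE.
rewrite big1 ?mulr1 // => g _; rewrite big_bool /F /site_prob !ffunE.
by case: ifP => _; case: (x _) => /=; rewrite ?addr0 ?add0r //; ring.
Qed.

Lemma trans_gt0 e (x y : state G) : 0 < p e ->
  (forall g, g \notin ev_R e -> y g = x g) -> 0 < trans p u nu x y.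
Proof.
move=> pe_gt0 y_off_R; rewrite /trans (bigD1 e) //= ltr_pwDl //.
  rewrite mulr_gt0 // prodr_gt0 // => g _.
  case: (boolP (g \in ev_R e)) => [/site_prob_replaced_gt0 //|g_notin].
  by rewrite /site_prob (negbTE g_notin) y_off_R // eqxx ltr01.
apply: sumr_ge0 => e' _; rewrite mulr_ge0 ?(proj1 p_rule) //.
by apply: prodr_ge0 => g _; apply: site_prob_ge0.
Qed.

Definition fill1 (x : state G) e : state G := [ffun g => (g \in ev_R e) || x g].

Lemma foldl_fill1E (x : state G) es g :
  foldl fill1 x es g = x g || has (fun e => g \in ev_R e) es.
Proof.
elim: es x => [|e es IH] x /=; first by rewrite orbF.
by rewrite IH ffunE orbCA orbA.
Qed.

Lemma comp_tilde_id (es : seq (event G)) g :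
  ~~ has (fun e => g \in ev_R e) es -> comp_tilde es g = g.
Proof.
elim: es => [|e es IH] //= /norP [g_notin_e /IH ->].
by rewrite /alpha_tilde (negbTE g_notin_e).
Qed.

Lemma kpow_trans_all1_gt0 : fixation_axiom p ->
  exists n, forall x, 0 < kpow (trans p u nu) n x [ffun=> true].
Proof.
move=> [g [es [_ es_gt0 [e0 e0_in g_in_e0] comp_g]]]; exists (size es) => x.
have covered h : has (fun e => h \in ev_R e) es.
  apply: contraT => h_free; have h_g : h = g by rewrite -(comp_g h) comp_tilde_id.
  by move/hasPn: h_free => /(_ e0 e0_in); rewrite h_g g_in_e0.
have -> : [ffun=> true] = foldl fill1 x es.
  by apply/ffunP => h; rewrite foldl_fill1E covered orbT ffunE.
apply: kpow_foldl_gt0 => [|e y e_in]; first exact: (proj1 trans_stochastic).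
apply: (trans_gt0 (es_gt0 e e_in)) => h /negbTE h_notin.
by rewrite ffunE h_notin.
Qed.

Lemma stationary_uniq pi1 pi2 : fixation_axiom p ->
  stationary p u nu pi1 -> stationary p u nu pi2 -> forall x, pi1 x = pi2 x.
Proof.
move=> /kpow_trans_all1_gt0 [n col_gt0] [_ pi1_sum1 pi1_inv] [_ pi2_sum1 pi2_inv].
apply: (invariant_uniq trans_stochastic col_gt0) => //.
by rewrite pi1_sum1 pi2_sum1.
Qed.

End Uniqueness.

Theorem proposition3 (R : realFieldType) (G : finType) (p : event G -> R)
  (u nu : R) (pi1 pi2 : state G -> R) :
  (0 < #|G|)%N ->
  is_rule p -> canonical_rule p -> fixation_axiom p ->
  0 < u -> u <= 1 -> 0 < nu -> nu < 1 ->
  stationary p u nu pi1 -> stationary p u (1 - nu) pi2 ->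
  forall x : state G, pi1 x = pi2 (flip x).
Proof.
move=> _ p_rule _ fix_ax u_gt0 u_le1 nu_gt0 nu_lt1 pi1_stat pi2_stat x.
exact: (stationary_uniq p_rule u_gt0 u_le1 nu_gt0 nu_lt1 fix_ax pi1_stat
          (stationary_flip pi2_stat)).
Qed.
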